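(* Let $\Omega\subseteq\mathbb R^N$ be a bounded open set and $\alpha\in(0,1)$. For every sequence $(u_i)\subseteq\mathcal X^\alpha(\Omega)$ with $\sup_i\|u_i\|_{\mathcal X^\alpha(\Omega)}<\infty$ there exist $u\in\mathcal X^\alpha(\Omega)$ and a subsequence $(u_{i_j})$ such that $\|u_{i_j}-u\|_{\mathcal Y(\Omega)}\to0$ as $j\to\infty$, i.e. $\|u_{i_j}-u\|^{(1)}_{\mathcal L^1(\Omega)}+\|u_{i_j}-u\|_{L^\infty(\Omega)}\to0$. In particular the inclusion $\mathcal X^\alpha(\Omega)\hookrightarrow\mathcal Y(\Omega)$ is compact.
   Context: $\ell(\rho):=|\ln(\min\{\rho,1/10\})|^{-1}$ ($\rho>0$), $\ell(0):=0$. $d(x):=\operatorname{dist}(x,\partial\Omega)$, $d(x,y):=\min(d(x),d(y))$. For $\alpha,\beta\ge0$ and $u:\Omega\to\mathbb R$: $[u]_{\mathcal L^\alpha(\Omega)}:=\sup_{x\ne y\in\Omega}\frac{|u(x)-u(y)|}{\ell^\alpha(|x-y|)}$, $[u]^{(\beta)}_{\mathcal L^\alpha(\Omega)}:=\sup_{x\neq y\in\Omega}\ell^{\alpha+\beta}(d(x,y))\frac{|u(x)-u(y)|}{\ell^\alpha(|x-y|)}$, $\|u\|^{(\beta)}_{\mathcal L^\alpha(\Omega)}:=\sup_{x\in\Omega}\ell^\beta(d(x))|u(x)|+[u]^{(\beta)}_{\mathcal L^\alpha(\Omega)}$. $\mathcal X^\alpha(\Omega)$ is the space of $u:\mathbb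 R^N\to\mathbb R$ with $u=0$ in $\mathbb R^N\setminus\Omega$ and $\|u\|_{\mathcal X^\alpha(\Omega)}:=\|u\|^{(0)}_{\mathcal L^{1+\alpha}(\Omega)}+[u]_{\mathcal L^\alpha(\mathbb R^N)}<\infty$; $\mathcal Y(\Omega)$ is the space of $f:\Omega\to\mathbb R$ with $\|f\|_{\mathcal Y(\Omega)}:=\|f\|^{(1)}_{\mathcal L^1(\Omega)}+\|f\|_{L^\infty(\Omega)}<\infty$. *)

From HB Require Import structures.
From mathcomp Require Import all_boot all_order all_algebra.
From mathcomp Require Import all_classical all_reals all_analysis.
Set Implicit Arguments. Unset Strict Implicit. Unset Printing Implicit Defensive.
Import Order.TTheory GRing.Theory Num.Theory.
Import numFieldNormedType.Exports.
Local Open Scope classical_set_scope.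
Local Open Scope ring_scope.

Section Defs.
Variable R : realType.
Variable N : nat.
Notation V := 'rV[R]_N.

Definition enorm (x : V) : R := Num.sqrt (\sum_(i < N) (x ord0 i) ^+ 2).

Definition ell (rho : R) : R :=
  if rho <= 0 then 0 else (`| ln (Num.min rho (10%:R)^-1) |)^-1.

(* d(x) = dist(x, boundary of Omega); for x in Omega (open) this is the
   distance to the complement of Omega. *)
Definition dist_bd (Om : set V) (x : V) : R :=
  inf [set enorm (x - y) | y in ~` Om].

Definition dist_bd2 (Om : set V) (x y : V) : R :=
  Num.min (dist_bd Om x) (dist_bd Om y).

(* supremum of a set of nonnegative extended reals; the empty sup is 0 *)
Definition nsup (S : set (\bar R)) : \bar R := ereal_sup ([set 0%E] `|` S).

Definition dpairs (A : set V) : set (V * V) :=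
  [set xy | A xy.1 /\ A xy.2 /\ xy.1 <> xy.2].

Definition semiL (A : set V) (a : R) (u : V -> R) : \bar R :=
  nsup [set ((`|u xy.1 - u xy.2| / (ell (enorm (xy.1 - xy.2)) `^ a))%:E)
       | xy in dpairs A].

Definition wsemiL (Om : set V) (a b : R) (u : V -> R) : \bar R :=
  nsup [set ((ell (dist_bd2 Om xy.1 xy.2) `^ (a + b)) * `|u xy.1 - u xy.2|
              / (ell (enorm (xy.1 - xy.2)) `^ a))%:E
       | xy in dpairs Om].

Definition wnormL (Om : set V) (a b : R) (u : V -> R) : \bar R :=
  (nsup [set ((ell (dist_bd Om x) `^ b) * `|u x|)%:E | x in Om]
   + wsemiL Om a b u)%E.

(* sup norm on Om (functions here are continuous on Om, so this is the L^oo norm) *)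
Definition supnorm (Om : set V) (u : V -> R) : \bar R :=
  nsup [set (`|u x|)%:E | x in Om].

Definition Xnorm (Om : set V) (a : R) (u : V -> R) : \bar R :=
  (wnormL Om (1 + a) 0 u + semiL setT a u)%E.

Definition inX (Om : set V) (a : R) (u : V -> R) : Prop :=
  (forall x, ~ Om x -> u x = 0) /\ (Xnorm Om a u < +oo)%E.

Definition Ynorm (Om : set V) (f : V -> R) : \bar R :=
  (wnormL Om 1 1 f + supnorm Om f)%E.

End Defs.

From HB Require Import structures.
From mathcomp Require Import all_boot all_order all_algebra.
From mathcomp Require Import all_classical all_reals all_analysis.
From mathcomp Require Import ring lra.
Import Order.TTheory GRing.Theory Num.Theory.
Import numFieldNormedType.Exports.
Local Open Scope classical_set_scope.
Local Open Scope ring_scope.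

(* An [X^a] bound [M] gives a uniform bound and the common modulus of continuity
   [M ell^a(|x - y|)] on the whole space (the functions vanish off [Om]), so by
   Arzela-Ascoli on a compact set containing [Om] a subsequence converges uniformly.
   The limit satisfies the same pointwise inequalities, hence lies in [X^a].
   The sup part of the [Y]-norm of the differences then tends to 0, and so does the
   weighted seminorm, by interpolation: for small [|x - y|] the
   [ell^(1+a)]-weighted bound of [X^a] leaves a spare factor [ell^a(|x - y|)],
   while for [|x - y|] bounded below the quotient is controlled by the sup norm. *)

Section Ell.
Context {R : realType}.
Implicit Types r s : R.

Lemma expR1_lt10 : expR (1 : R) < 10%:R.
Proof.
have e2 : (1 : R) = 2^-1 + 2^-1 by field.
(* [e^(1/2) < 2] because [e^(-1/2) > 1 - 1/2]. *)
have half_lt2 : expR (2^-1 : R) < 2.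
  have inv : expR (2^-1 : R) * expR (- 2^-1) = 1 by rewrite -expRD addrN expR0.
  have : 1 - 2^-1 < expR (- 2^-1 : R).
    by have := @expR_gt1Dx R (- 2^-1); rewrite oppr_eq0 invr_eq0 pnatr_eq0; apply.
  have := expR_gt0 (2^-1 : R); nra.
rewrite e2 expRD (@lt_trans _ _ (2 * 2)) //; last lra.
by rewrite ltr_pM // expR_ge0.
Qed.

Lemma ln10_gt1 : 1 < ln (10%:R : R).
Proof.
by rewrite -[X in X < _](expRK 1) ltr_ln ?posrE ?expR_gt0 ?ltr0n // expR1_lt10.
Qed.

Lemma ell_ge0 r : 0 <= ell r.
Proof. by rewrite /ell; case: ifP => // _; rewrite invr_ge0. Qed.

Lemma ell_posE {r} : 0 < r ->
  let m := Num.min r 10%:R^-1 in [/\ 0 < m, ln m < 0 & ell r = (- ln m)^-1].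
Proof.
move=> r0 m; have m0 : 0 < m by rewrite lt_min r0 invr_gt0 ltr0n.
have lnm0 : ln m < 0.
  rewrite ln_lt0 // m0 (@le_lt_trans _ _ 10%:R^-1) ?ge_min ?lexx ?orbT //.
  by rewrite invf_lt1 ?ltr1n ?ltr0n.
by rewrite /ell lt_geF // ltr0_norm.
Qed.

Lemma ell_gt0 {r} : 0 < r -> 0 < ell r.
Proof. by move=> /ell_posE [_ lt ->]; rewrite invr_gt0 oppr_gt0. Qed.

(* The cut-off at [1/10] is what makes [ell] bounded by [1]: [|ln (1/10)| > 1]. *)
Lemma ell_le1 r : ell r <= 1.
Proof.
have [r0|r0] := leP r 0; first by rewrite /ell r0.
have [m0 lnm0 ->] := ell_posE r0.
rewrite invf_le1 ?oppr_gt0 // lerNr (@le_trans _ _ (ln 10%:R^-1)) //.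
  by rewrite ler_ln ?posrE ?invr_gt0 ?ltr0n // ge_min lexx orbT.
by rewrite lnV ?posrE ?ltr0n // lerN2 ltW // ln10_gt1.
Qed.

Lemma ler_ell {r s} : 0 < r -> r <= s -> ell r <= ell s.
Proof.
move=> r0 rs; have s0 := lt_le_trans r0 rs.
have [m0 l0 ->] := ell_posE r0; have [m0' l0' ->] := ell_posE s0.
rewrite lef_pV2 ?posrE ?oppr_gt0 // lerN2 ler_ln ?posrE //.
by rewrite le_min !ge_min lexx orbT rs.
Qed.

Lemma ell_le_near0 {s} : 0 < s ->
  exists2 d : R, 0 < d & forall r, 0 < r -> r <= d -> ell r <= s.
Proof.
move=> s0; exists (Num.min (expR (- s^-1)) 10%:R^-1).
  by rewrite lt_min expR_gt0 invr_gt0 ltr0n.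
move=> r r0 rd; have [m0 lnm0 ->] := ell_posE r0.
rewrite -[s]invrK lef_pV2 ?posrE ?oppr_gt0 ?invr_gt0 // lerNr.
rewrite -[X in _ <= X]expRK ler_ln ?posrE ?expR_gt0 //.
apply: (@le_trans _ _ r); first by rewrite ge_min lexx.
by apply: le_trans rd _; rewrite ge_min lexx.
Qed.

Lemma ellpow_le_near0 {p eta} : 0 < p -> 0 < eta ->
  exists2 d : R, 0 < d & forall r, 0 < r -> r <= d -> ell r `^ p <= eta.
Proof.
move=> p0 eta0; have [d d0 hd] := ell_le_near0 (powR_gt0 p^-1 eta0).
exists d => // r r0 rd.
rewrite -[eta](powRr1 (ltW eta0)) -(mulVf (lt0r_neq0 p0)) powRrM.
by apply: ge0_ler_powR; rewrite ?nnegrE ?ell_ge0 ?powR_ge0 ?(ltW p0) ?hd.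
Qed.

Lemma ellpow_gt0 {r} p : 0 < r -> 0 < ell r `^ p.
Proof. by move=> /ell_gt0/powR_gt0. Qed.

Lemma ellpow_le1 r p : 0 <= p -> ell r `^ p <= 1.
Proof.
move=> p0; have [->|lp0] := eqVneq (ell r) 0.
  by have [->|pn] := eqVneq p 0; rewrite ?powRr0 // powR0.
rewrite -[X in _ <= X](powRr0 (ell r)) ger_powR //.
by rewrite lt_def lp0 ell_ge0 ell_le1.
Qed.

End Ell.

Section Enorm.
Context {R : realType} {N : nat}.
Implicit Types v x y : 'rV[R]_N.

Lemma rV_entry_le_norm v i : `|v ord0 i| <= `|v|.
Proof.
rewrite [`|v|]mx_normrE.
exact: (le_bigmax _ (fun ij : 'I_1 * 'I_N => `|v ij.1 ij.2|) (ord0, i)).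
Qed.

Lemma enorm_gt0 {x y} : x <> y -> 0 < enorm (x - y).
Proof.
move=> xy; rewrite /enorm sqrtr_gt0.
have [i xyi] : exists i, x ord0 i != y ord0 i.
  apply: contra_notP xy => xy_eq; apply/matrixP => j k; rewrite [j]ord1.
  by apply/eqP/negPn/negP => xyk; apply: xy_eq; exists k.
rewrite (bigD1 i) //= ltr_wpDr ?sumr_ge0 // => [j _|]; first exact: sqr_ge0.
by rewrite !mxE exprn_even_gt0 //= subr_eq0.
Qed.

Lemma enorm_le_norm v : enorm v <= N%:R * `|v|.
Proof.
rewrite /enorm -(@ger0_norm _ (N%:R * `|v|)) ?mulr_ge0 //.
rewrite -sqrtr_sqr ler_sqrt ?sqr_ge0 //.
apply: (@le_trans _ _ (\sum_(i < N) `|v| ^+ 2)).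
  apply: ler_sum => i _; rewrite -real_normK ?num_real //.
  by rewrite lerXn2r ?nnegrE ?rV_entry_le_norm.
rewrite sumr_const card_ord exprMn -[X in X <= _]mulr_natl ler_wpM2r ?sqr_ge0 //.
by rewrite -natrX ler_nat; case: (N) => // k; rewrite expnS leq_pmulr ?expn_gt0.
Qed.

Lemma ellpow_dist_gt0 x y p : x <> y -> 0 < ell (enorm (x - y)) `^ p.
Proof. by move=> /enorm_gt0/ellpow_gt0. Qed.

End Enorm.

Section Nsup.
Context {R : realType}.
Implicit Types S : set (\bar R).

Lemma nsup_ge0 S : (0 <= nsup S)%E.
Proof. by apply: ereal_sup_ubound; left. Qed.

Lemma nsup_ubound S x : S x -> (x <= nsup S)%E.
Proof. by move=> Sx; apply: ereal_sup_ubound; right. Qed.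

Lemma nsup_le S c : (0 <= c)%E -> (forall x, S x -> x <= c)%E -> (nsup S <= c)%E.
Proof. by move=> c0 Sc; apply/ereal_supP => y [->|/Sc]. Qed.

End Nsup.

Section Xnorm.
Context {R : realType} {N : nat}.
Implicit Types (Om : set 'rV[R]_N) (u : 'rV[R]_N -> R) (a M : R).

Definition Xbounded Om a M u : Prop :=
  [/\ forall x, Om x -> `|u x| <= M,
      forall x y, Om x -> Om y -> x <> y ->
        ell (dist_bd2 Om x y) `^ (1 + a) * `|u x - u y|
          <= M * ell (enorm (x - y)) `^ (1 + a)
    & forall x y, x <> y -> `|u x - u y| <= M * ell (enorm (x - y)) `^ a].

Lemma Xnorm_ge0 Om a u : (0 <= Xnorm Om a u)%E.
Proof. by rewrite /Xnorm /wnormL !adde_ge0 // nsup_ge0. Qed.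

Lemma Xbounded_of_Xnorm {Om a M u} : (Xnorm Om a u <= M%:E)%E -> Xbounded Om a M u.
Proof.
rewrite /Xnorm /wnormL.
set A := nsup _; set B := wsemiL _ _ _ _; set C := semiL _ _ _ => uM.
have A0 : (0 <= A)%E := nsup_ge0 _.
have B0 : (0 <= B)%E := nsup_ge0 _.
have C0 : (0 <= C)%E := nsup_ge0 _.
have AM : (A <= M%:E)%E by apply: le_trans uM; rewrite -addeA lee_paddr ?adde_ge0.
have BM : (B <= M%:E)%E by apply: le_trans uM; rewrite lee_paddr ?lee_paddl.
have CM : (C <= M%:E)%E by apply: le_trans uM; rewrite lee_paddl ?adde_ge0.
split=> [x Ox|x y Ox Oy xy|x y xy].
- rewrite -lee_fin (le_trans _ AM) // nsup_ubound //.
  by exists x => //; rewrite powRr0 mul1r.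
- rewrite -ler_pdivrMr ?ellpow_dist_gt0 // -lee_fin (le_trans _ BM) // nsup_ubound //.
  by exists (x, y) => //=; rewrite addr0.
- rewrite -ler_pdivrMr ?ellpow_dist_gt0 // -lee_fin (le_trans _ CM) // nsup_ubound //.
  by exists (x, y).
Qed.

Lemma Xnorm_le_of_Xbounded {Om a M u} : 0 <= M -> Xbounded Om a M u ->
  (Xnorm Om a u <= (M + M + M)%:E)%E.
Proof.
move=> M0 [uM wuM huM]; rewrite /Xnorm /wnormL !EFinD.
apply: leeD; first apply: leeD; apply: nsup_le; rewrite ?lee_fin //.
- by move=> _ [x Ox <-]; rewrite lee_fin powRr0 mul1r uM.
- move=> _ [[x y] [/= Ox [Oy xy]] <-].
  by rewrite lee_fin addr0 ler_pdivrMr ?ellpow_dist_gt0 ?wuM.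
- move=> _ [[x y] [/= Ox [Oy xy]] <-].
  by rewrite lee_fin ler_pdivrMr ?ellpow_dist_gt0 ?huM.
Qed.

End Xnorm.

Lemma weight_exchange {R : realType} {D L q K a : R} :
  0 <= D <= 1 -> 0 < L -> 0 <= q -> 0 <= a <= 1 ->
  D `^ (1 + a) * q <= K * L `^ (1 + a) -> D `^ (1 + 1) * q / L `^ 1 <= K * L `^ a.
Proof.
move=> /andP[D0 D1] L0 q0 /andP[a0 a1] Dq.
have a1_neq0 : 1 + a != 0 by rewrite gt_eqF // ltr_wpDr.
have DD : D `^ (1 + 1) <= D `^ (1 + a).
  have [->|Dn0] := eqVneq D 0; first by rewrite powR0 ?powR_ge0 // pnatr_eq0.
  by rewrite ger_powR ?lerD2l // lt_def Dn0 D0.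
rewrite powRr1 ?(ltW L0) // ler_pdivrMr // (le_trans (ler_wpM2r q0 DD)) //.
rewrite (le_trans Dq) // powRD; last by rewrite (negbTE a1_neq0).
by rewrite powRr1 ?(ltW L0) // mulrA mulrAC.
Qed.

Section Ynorm.
Context {R : realType} {N : nat}.
Implicit Types (Om : set 'rV[R]_N) (f : 'rV[R]_N -> R).

Lemma Ynorm_ge0 Om f : (0 <= Ynorm Om f)%E.
Proof. by rewrite /Ynorm /wnormL !adde_ge0 // nsup_ge0. Qed.

Lemma Ynorm_le Om f {eps t : R} : 0 <= eps -> 0 <= t ->
  (forall x, Om x -> `|f x| <= eps) ->
  (forall x y, Om x -> Om y -> x <> y ->
     ell (dist_bd2 Om x y) `^ (1 + 1) * `|f x - f y| / ell (enorm (x - y)) `^ 1 <= t) ->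
  (Ynorm Om f <= (eps + t + eps)%:E)%E.
Proof.
move=> eps0 t0 f_eps wf_t; rewrite /Ynorm /wnormL !EFinD.
apply: leeD; first apply: leeD; apply: nsup_le; rewrite ?lee_fin //.
- move=> _ [x Ox <-]; rewrite lee_fin powRr1 ?ell_ge0 // -[eps]mul1r.
  by rewrite ler_pM ?ell_ge0 ?ell_le1 ?f_eps.
- by move=> _ [[x y] [/= Ox [Oy xy]] <-]; rewrite lee_fin wf_t.
- by move=> _ [x Ox <-]; rewrite lee_fin f_eps.
Qed.

Lemma wsemiL1_small Om {a K e : R} : 0 < a <= 1 -> 0 < e -> 0 <= K ->
  exists2 c : R, 0 < c & forall f (eps : R), 0 <= eps -> eps <= c ->
   (forall x, Om x -> `|f x| <= eps) ->
   (forall x y, Om x -> Om y -> x <> y ->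
      ell (dist_bd2 Om x y) `^ (1 + a) * `|f x - f y|
        <= K * ell (enorm (x - y)) `^ (1 + a)) ->
   forall x y, Om x -> Om y -> x <> y ->
     ell (dist_bd2 Om x y) `^ (1 + 1) * `|f x - f y| / ell (enorm (x - y)) `^ 1 <= e.
Proof.
move=> /andP[a0 a1] e0 K0; have K1 : 0 < K + 1 by rewrite ltr_wpDl.
have [d d0 hd] := ellpow_le_near0 a0 (divr_gt0 e0 K1).
have ld0 : 0 < ell d := ell_gt0 d0.
exists (e * ell d / 2) => [|f eps eps0 eps_c f_eps wf x y Ox Oy xy].
  by rewrite !mulr_gt0.
have r0 := enorm_gt0 xy; set r := enorm (x - y) in r0 *.
have fxy : `|f x - f y| <= 2 * eps.
  by rewrite (le_trans (ler_normB _ _)) // mulr2n mulrDl mul1r lerD ?f_eps.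
have [rd|dr] := leP r d.
- apply: le_trans (weight_exchange _ (ell_gt0 r0) _ _ (wf x y Ox Oy xy)) _.
  + by rewrite ell_ge0 ell_le1.
  + by rewrite normr_ge0.
  + by rewrite (ltW a0) a1.
  rewrite (le_trans (ler_wpM2l K0 (hd r r0 rd))) // mulrCA ger_pMr //.
  by rewrite ler_pdivrMr // mul1r lerDl.
- rewrite powRr1 ?ell_ge0 // ler_pdivrMr ?ell_gt0 //.
  have lD := ellpow_le1 (dist_bd2 Om x y) (1 + 1) (addr_ge0 ler01 ler01).
  rewrite (le_trans (ler_pM _ _ lD (lexx `|f x - f y|))) ?powR_ge0 // mul1r.
  rewrite (le_trans fxy) // (le_trans _ (ler_wpM2l (ltW e0) (ler_ell d0 (ltW dr)))) //.
  by move: eps_c; rewrite ler_pdivlMr //; lra.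
Qed.

End Ynorm.

Lemma nat_subseq_choice (P : nat -> nat -> Prop) :
  (forall k m, exists i, (m <= i)%N /\ P k i) ->
  exists phi : nat -> nat,
    {homo phi : m n / (m < n)%N >-> (m < n)%N} /\ forall k, P k (phi k).
Proof.
move=> P_ev; have pick k m : {i | (m <= i)%N /\ P k i} by apply: cid; exact: P_ev.
pose phi := fix phi k := if k is k'.+1 then sval (pick k (phi k').+1) else sval (pick 0 0).
exists phi; split; last by case=> [|k] /=; [case: (pick 0 0)|case: (pick k.+1 _)] => ? [].
by apply: homo_ltn => [m n p|k /=]; [exact: ltn_trans|case: (pick k.+1 _) => ? []].
Qed.

Section Ascoli.
Context {R : realType} {n : nat}.
Local Notation X := 'rV[R]_n.

Lemma rV_closed_ball_compact (x : X) (e : R) : 0 < e -> compact (closed_ball x e).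
Proof.
move=> e0; apply: bounded_closed_compact; last exact: closed_ball_closed.
exists (`|x| + e); split=> [|M xeM y]; first exact: num_real.
rewrite closed_ballE // => /= xy; rewrite ltW // (le_lt_trans _ xeM) //.
by rewrite -[y](subKr x) (le_trans (ler_normB _ _)) // lerD2l.
Qed.

Lemma rV_locally_compact : locally_compact [set: X].
Proof.
move=> x _; rewrite withinET; exists (closed_ball x 1).
  by apply/nbhs_closedballP; exists 1%:pos.
by split; [apply: rV_closed_ball_compact | apply: closed_ball_closed].
Qed.

Lemma bounded_sub_compact {A : set X} : bounded_set A -> exists2 K, compact K & A `<=` K.
Proof.
move=> [B [_ AB]]; exists (closed_ball 0 (`|B| + 1)).
  by apply: rV_closed_ball_compact; rewrite ltr_wpDl.
move=> x Ax; rewrite closed_ballE ?ltr_wpDl // /closed_ball_ /= [X in `|X|]sub0r normrN.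
by apply: AB Ax; rewrite (le_lt_trans (ler_norm B)) ?ltrDl.
Qed.

Lemma ell_modulus_equicontinuous (W : set {family compact, X -> R}) (M a : R) :
  0 < a -> 0 <= M ->
  (forall f, W f -> forall x y, x <> y -> `|f x - f y| <= M * ell (enorm (x - y)) `^ a) ->
  equicontinuous W id.
Proof.
move=> a0 M0 W_mod x E; rewrite -entourage_from_ballE => -[e /= e0 eE].
have M1 : 0 < M + 1 by rewrite ltr_wpDl.
have [d d0 hd] := ellpow_le_near0 a0 (divr_gt0 e0 M1).
have n0 : 0 < n.+1%:R :> R by rewrite ltr0n.
apply/nbhs_ballP; exists (d / n.+1%:R); first exact: divr_gt0.
move=> y; rewrite -ball_normE /= => xy f Wf; apply: eE; rewrite /= -ball_normE /=.
have [<-|/eqP xy'] := eqVneq x y; first by rewrite subrr normr0.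
rewrite (le_lt_trans (W_mod f Wf x y xy')) // (le_lt_trans (ler_wpM2l M0 (hd _ _ _))) //.
- exact: enorm_gt0.
- rewrite (le_trans (enorm_le_norm _)) // (@le_trans _ _ (n.+1%:R * `|x - y|)) //.
    by rewrite ler_wpM2r // ler_nat.
  by rewrite mulrC -ler_pdivlMr // ltW.
- by rewrite mulrCA gtr_pMr // ltr_pdivrMr // mul1r ltrDl.
Qed.

Lemma ascoli_subseq {u_ : nat -> X -> R} {K : set X} {M a : R} :
  compact K -> 0 < a ->
  (forall i x, `|u_ i x| <= M) ->
  (forall i x y, x <> y -> `|u_ i x - u_ i y| <= M * ell (enorm (x - y)) `^ a) ->
  exists (f : X -> R) (phi : nat -> nat),
    {homo phi : m n / (m < n)%N >-> (m < n)%N} /\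
    forall k x, K x -> `|f x - u_ (phi k) x| < k.+1%:R^-1.
Proof.
move=> cK a0 u_M u_mod; have M0 : 0 <= M := le_trans (normr_ge0 _) (u_M 0%N 0).
pose W : set {family compact, X -> R} := range u_.
have W_ptw : pointwise_precompact W id.
  move=> x; apply: (@precompact_subset _ _ [set` `[- M, M]]).
    by move=> _ [g [i _ <-] <-]; rewrite /= in_itv /= -ler_norml.
  by apply: compact_precompact; [exact: Rhausdorff|exact: segment_compact].
have W_eqc : equicontinuous W id.
  by apply: (ell_modulus_equicontinuous _ _ _ a0 M0) => _ [i _ <-]; exact: u_mod.
have [_ W_pc] := (@Ascoli X R (@Rhausdorff R) W rV_locally_compact).1 (conj W_ptw W_eqc).
rewrite precompactE in W_pc.
pose F := fmap (u_ : nat -> {family compact, X -> R}) \oo.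
have FW : F (closure W) by exists 0%N => // i _; apply: subset_closure; exists i.
have [f [_ f_clu]] := W_pc F _ FW.
exists f; apply: (nat_subseq_choice
  (fun k i => forall x, K x -> `|f x - u_ i x| < k.+1%:R^-1)) => k m.
have k0 : 0 < k.+1%:R^-1 :> R by rewrite invr_gt0 ltr0n.
have near_f := fam_nbhs f (entourage_ball _ (PosNum k0)) cK.
have tail : F [set g | exists2 i, (m <= i)%N & g = u_ i] by exists m => // i /= mi; exists i.
have [_ [[i mi ->] f_ui]] := f_clu _ _ tail near_f.
by exists i; split => // x Kx; have := f_ui x Kx; rewrite -ball_normE.
Qed.

End Ascoli.

Section Limits.
Context {R : realType} {N : nat}.
Implicit Types (Om : set 'rV[R]_N) (u : 'rV[R]_N -> R) (a M : R).

Lemma le_of_approx (p q c : R) : 0 <= c ->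
  (forall k : nat, p <= q + c * k.+1%:R^-1) -> p <= q.
Proof.
move=> c0 pq; apply/ler_addgt0Pr => e e0; have c1 : 0 < c + 1 by rewrite ltr_wpDl.
have [k _ /(_ k (leqnn k)) /= ke] := near_infty_natSinv_lt (PosNum (divr_gt0 e0 c1)).
rewrite (le_trans (pq k)) // lerD2l; move: ke; rewrite ltr_pdivlMr // => /ltW.
by apply: le_trans; rewrite mulrC ler_wpM2l ?invr_ge0 // lerDl.
Qed.

Lemma Xbounded_limit {Om a M} {v_ : nat -> 'rV[R]_N -> R} {u} : 0 <= a ->
  (forall k x, `|v_ k x - u x| <= k.+1%:R^-1) ->
  (forall k, Xbounded Om a M (v_ k)) -> Xbounded Om a M u.
Proof.
move=> a0 vu vM.
have u_diff k x y : `|u x - u y| <= `|v_ k x - v_ k y| + 2 * k.+1%:R^-1.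
  have -> : u x - u y = (v_ k x - v_ k y) - (v_ k x - u x) + (v_ k y - u y) by ring.
  rewrite (le_trans (ler_normD _ _)) // (le_trans (lerD (ler_normB _ _) (vu k y))) //.
  by rewrite -addrA lerD2l mulr2n mulrDl mul1r lerD2r vu.
split=> [x Ox|x y Ox Oy xy|x y xy].
- apply: (@le_of_approx _ _ 1) => // k; have [vkM _ _] := vM k.
  rewrite mul1r (le_trans (_ : _ <= `|v_ k x| + `|v_ k x - u x|)) ?lerD ?vkM ?vu //.
  by have := ler_normD (v_ k x) (u x - v_ k x); rewrite addrC subrK distrC.
- apply: (@le_of_approx _ _ 2) => // k; have [_ vkM _] := vM k.
  set D := ell (dist_bd2 Om x y) `^ (1 + a).
  have D0 : 0 <= D := powR_ge0 _ _.
  have D1 : D <= 1 by apply: ellpow_le1; rewrite addr_ge0.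
  rewrite (le_trans (ler_wpM2l D0 (u_diff k x y))) // mulrDr lerD ?vkM //.
  by rewrite ler_piMl // mulr_ge0 ?invr_ge0.
- apply: (@le_of_approx _ _ 2) => // k; have [_ _ vkM] := vM k.
  by rewrite (le_trans (u_diff k x y)) // lerD2r vkM.
Qed.

End Limits.

Lemma cvge0_near_le {R : realType} (s : nat -> \bar R) : (forall k, 0 <= s k)%E ->
  (forall e : R, 0 < e -> \forall k \near \oo, (s k <= e%:E)%E) -> s @ \oo --> 0%E.
Proof.
move=> s0 s_le.
have s_fin : \forall k \near \oo, s k \is a fin_num.
  by apply: filterS (s_le 1 ltr01) => k sk1; rewrite ge0_fin_numE ?(le_lt_trans sk1) ?ltry.
apply: cvg_EFin => //; apply/cvgr0Pnorm_le => e e0.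
apply: filterS (filterI s_fin (s_le e e0)) => k [sk_fin ske] /=.
by rewrite ger0_norm ?fine_ge0 // -lee_fin fineK.
Qed.

Section Yconvergence.
Context {R : realType} {N : nat}.
Implicit Types (Om : set 'rV[R]_N) (f g : 'rV[R]_N -> R) (a M : R).

Lemma Xbounded_wsemi_sub {Om a M f g} : Xbounded Om a M f -> Xbounded Om a M g ->
  forall x y, Om x -> Om y -> x <> y ->
    ell (dist_bd2 Om x y) `^ (1 + a) * `|(f x - g x) - (f y - g y)|
      <= (M + M) * ell (enorm (x - y)) `^ (1 + a).
Proof.
move=> [_ fM _] [_ gM _] x y Ox Oy xy.
have -> : (f x - g x) - (f y - g y) = (f x - f y) - (g x - g y) by ring.
rewrite mulrDl (le_trans (ler_wpM2l (powR_ge0 _ _) (ler_normB _ _))) //.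
by rewrite mulrDr lerD ?fM ?gM.
Qed.

Lemma Ynorm_sub_near_le Om a M (v_ : nat -> 'rV[R]_N -> R) u :
  0 < a <= 1 -> 0 <= M ->
  (forall k x, Om x -> `|v_ k x - u x| <= k.+1%:R^-1) ->
  (forall k, Xbounded Om a M (v_ k)) -> Xbounded Om a M u ->
  forall e : R, 0 < e ->
    \forall k \near \oo, (Ynorm Om (fun x => (v_ k x - u x)%R) <= e%:E)%E.
Proof.
move=> a01 M0 vu vM uM e e0; have e3 : 0 < e / 3%:R by rewrite divr_gt0.
have [c c0 c_small] := wsemiL1_small Om a01 e3 (addr_ge0 M0 M0).
have ce3 : 0 < Num.min c (e / 3%:R) by rewrite lt_min c0 e3.
near=> k; have k0 : 0 <= k.+1%:R^-1 :> R by rewrite invr_ge0.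
have : k.+1%:R^-1 < Num.min c (e / 3%:R).
  by near: k; exact: near_infty_natSinv_lt (PosNum ce3).
rewrite lt_min => /andP[/ltW kc /ltW ke].
apply: (le_trans (Ynorm_le _ _ k0 (ltW e3) (vu k) _)).
  exact: (c_small (fun x => v_ k x - u x) _ k0 kc (vu k) (Xbounded_wsemi_sub (vM k) uM)).
by rewrite lee_fin; move: ke; set i := k.+1%:R^-1; lra.
Unshelve. all: by end_near.
Qed.

End Yconvergence.

Theorem lemma7p4 (R : realType) (N : nat) (Om : set 'rV[R]_N) (a : R)
    (u_ : nat -> 'rV[R]_N -> R) :
  (0 < N)%N -> open Om -> bounded_set Om -> 0 < a < 1 ->
  (forall i, inX Om a (u_ i)) ->
  (exists M : R, forall i, (Xnorm Om a (u_ i) <= M%:E)%E) ->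
  exists (u : 'rV[R]_N -> R) (phi : nat -> nat),
    [/\ inX Om a u,
        {homo phi : m n / (m < n)%N >-> (m < n)%N} &
        (fun j => Ynorm Om (fun x => u_ (phi j) x - u x)) @ \oo --> 0%E].
Proof.
move=> _ _ Om_bd /andP[a0 a1] uX [M uM].
have M0 : 0 <= M by rewrite -lee_fin (le_trans (Xnorm_ge0 _ _ _) (uM 0%N)).
have uB i : Xbounded Om a M (u_ i) := Xbounded_of_Xnorm (uM i).
have u_le i x : `|u_ i x| <= M.
  have [Ox|Ox] := pselect (Om x); first by case: (uB i) => + _ _; apply.
  by rewrite (uX i).1 // normr0.
have u_mod i x y : x <> y -> `|u_ i x - u_ i y| <= M * ell (enorm (x - y)) `^ a.
  by case: (uB i) => _ _; apply.
have [K K_cpt OmK] := bounded_sub_compact Om_bd.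
have [f [phi [phi_incr f_close]]] := ascoli_subseq K_cpt a0 u_le u_mod.
pose u x := if asbool (Om x) then f x else 0.
have u_close k x : `|u_ (phi k) x - u x| <= k.+1%:R^-1.
  rewrite /u; case: asboolP => Ox; first by rewrite distrC; apply/ltW/f_close/OmK.
  by rewrite (uX _).1 // subrr normr0 invr_ge0.
have uB_lim : Xbounded Om a M u := Xbounded_limit (ltW a0) u_close (fun k => uB (phi k)).
exists u, phi; split=> //.
  split=> [x Ox|]; first by rewrite /u; case: asboolP.
  by rewrite (le_lt_trans (Xnorm_le_of_Xbounded M0 uB_lim)) ?ltry.
apply: cvge0_near_le => [k|]; first exact: Ynorm_ge0.
apply: (Ynorm_sub_near_le _ _ _ (fun k => u_ (phi k)) _ _ M0 _ (fun k => uB (phi k)) uB_lim).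
  by rewrite a0 ltW.
by move=> k x _; exact: u_close.
Qed.
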